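(* Let $\mu\in V_n$. Then (i) $\operatorname{tr}(\mathrm M_\mu D)=0$ for every $D\in\mathrm{Der}(\mu)$; (ii) $\operatorname{tr}(\mathrm M_\mu[A,A^*])\ge 0$ for every $A\in\mathrm{Der}(\mu)$, with equality if and only if $A^*\in\mathrm{Der}(\mu)$.
   Context: $V_n$ is the space of bilinear maps $\mu:\mathbb C^n\times\mathbb C^n\to\mathbb C^n$; $\mathbb C^n$ has its standard Hermitian inner product and $A^*$ is the adjoint. $\mathrm{Der}(\mu)=\{D\in\mathfrak{gl}(n): D\mu(X,Y)=\mu(DX,Y)+\mu(X,DY)\ \forall X,Y\}$. For $X\in\mathbb C^n$, $L^\mu_X Y=\mu(X,Y)$, $R^\mu_X Y=\mu(Y,X)$, and for an orthonormal basis $\{X_i\}$ of $\mathbb C^n$, $\mathrm M_\mu=2\sum_i L^\mu_{X_i}(L^\mu_{X_i})^*-2\sum_i (L^\mu_{X_i})^*L^\mu_{X_i}-2\sum_i (R^\mu_{X_i})^*R^\mu_{X_i}$. *)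

From HB Require Import structures.
From mathcomp Require Import all_boot all_order all_algebra.
From mathcomp Require Import complex.
From mathcomp Require Import reals.
Set Implicit Arguments. Unset Strict Implicit. Unset Printing Implicit Defensive.
Import Order.TTheory GRing.Theory Num.Theory.
Local Open Scope ring_scope.

(* Vectors of C^n are column vectors 'cV[C]_n, with C = R[i] for R : realType
   (the complex numbers).  Linear maps of C^n are n x n matrices acting on the left. *)

Section BilinearAlgebras.
Variable C : numClosedFieldType.
Variable n : nat.

Definition bilinear_map (mu : 'cV[C]_n -> 'cV[C]_n -> 'cV[C]_n) : Prop :=
  (forall (a : C) (X X' Y : 'cV[C]_n), mu (a *: X + X') Y = a *: mu X Y + mu X' Y) /\
  (forall (a : C) (X Y Y' : 'cV[C]_n), mu X (a *: Y + Y') = a *: mu X Y + mu X Y').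

Definition e_ (i : 'I_n) : 'cV[C]_n := delta_mx i 0.

Definition adjmx (A : 'M[C]_n) : 'M[C]_n := (map_mx Num.conj A)^T.

(* matrices of L^mu_X : Y |-> mu(X,Y)  and  R^mu_X : Y |-> mu(Y,X) *)
Definition Lmx (mu : 'cV[C]_n -> 'cV[C]_n -> 'cV[C]_n) (X : 'cV[C]_n) : 'M[C]_n :=
  \matrix_(i, j) (mu X (e_ j)) i 0.
Definition Rmx (mu : 'cV[C]_n -> 'cV[C]_n -> 'cV[C]_n) (X : 'cV[C]_n) : 'M[C]_n :=
  \matrix_(i, j) (mu (e_ j) X) i 0.

Definition is_derivation (mu : 'cV[C]_n -> 'cV[C]_n -> 'cV[C]_n) (D : 'M[C]_n) : Prop :=
  forall X Y : 'cV[C]_n, D *m mu X Y = mu (D *m X) Y + mu X (D *m Y).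

Definition Mmu (mu : 'cV[C]_n -> 'cV[C]_n -> 'cV[C]_n) : 'M[C]_n :=
  2%:R *: (\sum_(i < n) Lmx mu (e_ i) *m adjmx (Lmx mu (e_ i)))
  - 2%:R *: (\sum_(i < n) adjmx (Lmx mu (e_ i)) *m Lmx mu (e_ i))
  - 2%:R *: (\sum_(i < n) adjmx (Rmx mu (e_ i)) *m Rmx mu (e_ i)).

End BilinearAlgebras.

From HB Require Import structures.
From mathcomp Require Import all_boot all_order all_algebra.
From mathcomp Require Import ring.
From mathcomp Require Import complex.
From mathcomp Require Import reals.
Import Order.TTheory GRing.Theory Num.Theory.
Local Open Scope ring_scope.

(* A bilinear map mu is encoded by the family L = (L_{e_i})_i of
   its left multiplications.  A matrix D acts on such families by the
   derivation defect
       pi D T_i = D T_i - sum_m D_{mi} T_m - T_i D,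
   which for T = L is the family of left multiplications of
   (X, Y) |-> D mu(X,Y) - mu(DX,Y) - mu(X,DY); hence D is a derivation of mu
   iff pi D L = 0.  With the Frobenius inner product <S, T> = sum_i tr(S_i T_i^* )
   on families, we show:
   - pi (D^* ) is the adjoint of pi D, and pi [A, B] = [pi A, pi B];
   - tr(M_mu D) = 2 <pi D L, L>  (a reindexing of the three sums in M_mu).
   Part (i) follows at once.  For (ii), if A is a derivation then
   tr(M_mu [A, A^*]) = 2 <pi A (pi A^* L) - pi A^* (pi A L), L> = 2 |pi A^* L|^2,
   which is nonnegative and vanishes iff pi A^* L = 0, i.e. iff A^* is a derivation. *)

Section FamilyCalculus.
Context {C : numClosedFieldType} {n : nat}.
Local Notation family := ('I_n -> 'M[C]_n).

Lemma adjmxE (A : 'M[C]_n) i j : adjmx A i j = (A j i)^*.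
Proof. by rewrite !mxE. Qed.

Lemma adjmxK (A : 'M[C]_n) : adjmx (adjmx A) = A.
Proof. by apply/matrixP=> i j; rewrite !adjmxE conjCK. Qed.

Lemma adjmxM (A B : 'M[C]_n) : adjmx (A *m B) = adjmx B *m adjmx A.
Proof.
apply/matrixP=> i j; rewrite adjmxE !mxE rmorph_sum; apply: eq_bigr => k _.
by rewrite !adjmxE rmorphM mulrC.
Qed.

Lemma adjmxB (A B : 'M[C]_n) : adjmx (A - B) = adjmx A - adjmx B.
Proof. by apply/matrixP=> i j; rewrite !(mxE, adjmxE) rmorphB. Qed.

Lemma adjmx_sumZ (a : 'I_n -> C) (T : family) :
  adjmx (\sum_m a m *: T m) = \sum_m (a m)^* *: adjmx (T m).
Proof.
apply/matrixP=> i j; rewrite adjmxE !summxE rmorph_sum; apply: eq_bigr => k _.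
by rewrite !mxE rmorphM.
Qed.

Definition famdot (S T : family) : C := \sum_i \tr (S i *m adjmx (T i)).

Lemma famdotBl (S1 S2 T : family) :
  famdot (fun i => S1 i - S2 i) T = famdot S1 T - famdot S2 T.
Proof. by rewrite /famdot -sumrB; apply: eq_bigr => i _; rewrite mulmxBl linearB. Qed.

Lemma famdotBr (S T1 T2 : family) :
  famdot S (fun i => T1 i - T2 i) = famdot S T1 - famdot S T2.
Proof.
by rewrite /famdot -sumrB; apply: eq_bigr => i _; rewrite adjmxB mulmxBr linearB.
Qed.

Lemma famdot0l (S T : family) : (forall i, S i = 0) -> famdot S T = 0.
Proof. by move=> S0; rewrite /famdot big1 // => i _; rewrite S0 mul0mx linear0. Qed.

Lemma famdot_mull (D : 'M[C]_n) (S T : family) :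
  famdot (fun i => D *m S i) T = famdot S (fun i => adjmx D *m T i).
Proof.
apply: eq_bigr => i _.
by rewrite adjmxM adjmxK -mulmxA mxtrace_mulC -mulmxA.
Qed.

Lemma famdot_mulr (D : 'M[C]_n) (S T : family) :
  famdot (fun i => S i *m D) T = famdot S (fun i => T i *m adjmx D).
Proof. by apply: eq_bigr => i _; rewrite adjmxM adjmxK mulmxA. Qed.

(* D acting on the index of a family: for T = L this is X |-> L_{DX}. *)
Definition mix (D : 'M[C]_n) (T : family) : family :=
  fun i => \sum_m D m i *: T m.

Lemma famdot_mix (D : 'M[C]_n) (S T : family) :
  famdot (mix D S) T = famdot S (mix (adjmx D) T).
Proof.
rewrite /famdot /mix.
under eq_bigr do rewrite mulmx_suml raddf_sum.
under [RHS]eq_bigr do rewrite adjmx_sumZ mulmx_sumr raddf_sum.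
rewrite exchange_big; apply: eq_bigr => m _; apply: eq_bigr => i _.
by rewrite -scalemxAl -scalemxAr adjmxE conjCK.
Qed.

Lemma mixM (A B : 'M[C]_n) (T : family) i : mix A (mix B T) i = mix (B *m A) T i.
Proof.
rewrite /mix; under eq_bigr do rewrite scaler_sumr.
rewrite exchange_big; apply: eq_bigr => p _; rewrite mxE scaler_suml.
by apply: eq_bigr => m _; rewrite scalerA mulrC.
Qed.

Lemma mul_mix (A B : 'M[C]_n) (T : family) i :
  A *m mix B T i = mix B (fun m => A *m T m) i.
Proof. by rewrite /mix mulmx_sumr; apply: eq_bigr => m _; rewrite scalemxAr. Qed.

Lemma mix_mul (A B : 'M[C]_n) (T : family) i :
  mix B T i *m A = mix B (fun m => T m *m A) i.
Proof. by rewrite /mix mulmx_suml; apply: eq_bigr => m _; rewrite scalemxAl. Qed.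

Lemma mixBr (D : 'M[C]_n) (T1 T2 : family) i :
  mix D (fun m => T1 m - T2 m) i = mix D T1 i - mix D T2 i.
Proof. by rewrite /mix -sumrB; apply: eq_bigr => m _; rewrite scalerBr. Qed.

Lemma mixBl (A B : 'M[C]_n) (T : family) i : mix (A - B) T i = mix A T i - mix B T i.
Proof. by rewrite /mix -sumrB; apply: eq_bigr => m _; rewrite !mxE scalerBl. Qed.

Definition pi (D : 'M[C]_n) (T : family) : family :=
  fun i => D *m T i - mix D T i - T i *m D.

Lemma famdot_pi (D : 'M[C]_n) (S T : family) :
  famdot (pi D S) T = famdot S (pi (adjmx D) T).
Proof.
rewrite /pi (famdotBl (fun i => D *m S i - mix D S i)) famdotBl.
rewrite famdot_mull famdot_mulr famdot_mix.
by rewrite (famdotBr S (fun i => adjmx D *m T i - mix (adjmx D) T i)) famdotBr.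
Qed.

(* pi is a Lie algebra morphism.  After expanding both sides into twelve
   products, what remains is an identity of the additive group of matrices. *)
Lemma pi_commutator (A B : 'M[C]_n) (T : family) i :
  pi (A *m B - B *m A) T i = pi A (pi B T) i - pi B (pi A T) i.
Proof.
rewrite /pi (mixBr A (fun m => B *m T m - mix B T m)) mixBr.
rewrite (mixBr B (fun m => A *m T m - mix A T m)) mixBr.
rewrite mixBl !mixM !mulmxBr !mulmxBl !mul_mix !mix_mul !mulmxA.
move: (A *m B *m T i) (B *m A *m T i) (mix (A *m B) T i) (mix (B *m A) T i)
  (T i *m A *m B) (T i *m B *m A) (mix B (fun m => A *m T m) i) (A *m T i *m B)
  (mix A (fun m => B *m T m) i) (mix A (fun m => T m *m B) i) (B *m T i *m A)
  (mix B (fun m => T m *m A) i) => ? ? ? ? ? ? ? ? ? ? ? ?.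
by apply/matrixP=> k l; rewrite !mxE; ring.
Qed.

Lemma trace_mul_adj (X Y : 'M[C]_n) :
  \tr (X *m adjmx Y) = \sum_k \sum_j X k j * (Y k j)^*.
Proof.
rewrite /mxtrace; apply: eq_bigr => k _; rewrite mxE; apply: eq_bigr => j _.
by rewrite adjmxE.
Qed.

Lemma trace_mul_adj_ge0 (X : 'M[C]_n) : 0 <= \tr (X *m adjmx X).
Proof.
by rewrite trace_mul_adj; do 2![apply: sumr_ge0 => ? _]; apply: mul_conjC_ge0.
Qed.

Lemma famdot_ge0 (T : family) : 0 <= famdot T T.
Proof. by apply: sumr_ge0 => i _; apply: trace_mul_adj_ge0. Qed.

Lemma famdot_eq0 (T : family) : famdot T T = 0 -> forall i, T i = 0.
Proof.
move=> T0 i; apply/matrixP=> k j; rewrite mxE.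
have Ti0 : \tr (T i *m adjmx (T i)) = 0.
  by apply: (psumr_eq0P _ T0) => // i' _; apply: trace_mul_adj_ge0.
have Tik0 : \sum_j (T i k j * (T i k j)^*) = 0.
  move: Ti0; rewrite trace_mul_adj => Ti0; apply: (psumr_eq0P _ Ti0) => // k' _.
  by apply: sumr_ge0 => j' _; apply: mul_conjC_ge0.
apply/eqP; rewrite -mul_conjC_eq0; apply/eqP.
by apply: (psumr_eq0P _ Tik0) => // j' _; apply: mul_conjC_ge0.
Qed.

End FamilyCalculus.

Lemma scale_sub3 (R : pzRingType) (V : lmodType R) (a : R) (p q r p' q' r' : V) :
  a *: (p - q - r) + (p' - q' - r') = (a *: p + p') - (a *: q + q') - (a *: r + r').
Proof.
rewrite !scalerBr !opprD !addrA (addrAC _ (- (a *: r)) p') (addrAC _ (- (a *: q)) p').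
by rewrite (addrAC _ (- (a *: r)) (- q')).
Qed.

Section DerivationsOfBilinearMaps.
Context {C : numClosedFieldType} {n : nat}.
Local Notation e i := (e_ C i).
Local Notation bimap := ('cV[C]_n -> 'cV[C]_n -> 'cV[C]_n).

Lemma col_expand (v : 'cV[C]_n) : v = \sum_m v m 0 *: e m.
Proof.
apply/matrixP=> k l; rewrite (ord1 l) summxE (bigD1 k) //= big1 ?addr0.
  by rewrite !mxE eqxx mulr1.
by move=> m mk; rewrite !mxE eq_sym (negbTE mk) mulr0.
Qed.

Lemma mul_e (D : 'M[C]_n) j : D *m e j = \sum_m D m j *: e m.
Proof.
rewrite {1}(col_expand (D *m e j)); apply: eq_bigr => m _; congr (_ *: _).
rewrite mxE (bigD1 j) //= big1 ?addr0; first by rewrite !mxE eqxx mulr1.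
by move=> p pj; rewrite !mxE (negbTE pj) mulr0.
Qed.

Lemma linear_combination (f : 'cV[C]_n -> 'cV[C]_n)
    (f_lin : forall a X X', f (a *: X + X') = a *: f X + f X')
    (a : 'I_n -> C) (F : 'I_n -> 'cV[C]_n) :
  f (\sum_m a m *: F m) = \sum_m a m *: f (F m).
Proof.
have f0 : f 0 = 0.
  have := f_lin 1 0 0; rewrite !scale1r addr0 => f00.
  by apply: (@addrI _ (f 0)); rewrite addr0 -f00.
apply: (big_rec2 (fun y1 y2 => f y1 = y2)) => // m y1 y2 _ <-.
by rewrite f_lin.
Qed.

Lemma bilinear_eq0 (f : bimap) : bilinear_map f ->
  (forall i j, f (e i) (e j) = 0) -> forall X Y, f X Y = 0.
Proof.
case=> f_linl f_linr f_basis0 X Y.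
rewrite (col_expand X) (linear_combination (f^~ Y)); last by move=> a X1 X2; apply: f_linl.
apply: big1 => i _; rewrite (col_expand Y) (linear_combination (f (e i))).
  by rewrite big1 ?scaler0 // => j _; rewrite f_basis0 scaler0.
by move=> a Y1 Y2; apply: f_linr.
Qed.

Variables (mu : bimap).
Hypothesis mu_bilinear : bilinear_map mu.

Definition defect (D : 'M[C]_n) : bimap :=
  fun X Y => D *m mu X Y - mu (D *m X) Y - mu X (D *m Y).

Lemma defect_bilinear (D : 'M[C]_n) : bilinear_map (defect D).
Proof.
case: mu_bilinear => mu_linl mu_linr.
split=> a X X' Y; rewrite /defect !mulmxDr -!scalemxAr ?mu_linl ?mu_linr;
  by rewrite mulmxDr -scalemxAr scale_sub3.
Qed.

Lemma derivation_defect (D : 'M[C]_n) :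
  is_derivation mu D <-> forall X Y, defect D X Y = 0.
Proof.
split=> [Dder X Y | D0 X Y]; first by rewrite /defect Dder addrAC addrK subrr.
by apply/eqP; rewrite -subr_eq0 opprD addrA; apply/eqP/D0.
Qed.

Definition Lfam : 'I_n -> 'M[C]_n := fun i => Lmx mu (e i).

Lemma pi_Lfam (D : 'M[C]_n) i : pi D Lfam i = Lmx (defect D) (e i).
Proof.
case: mu_bilinear => mu_linl mu_linr.
have mu_Dl j : mu (D *m e i) (e j) = \sum_m D m i *: mu (e m) (e j).
  by rewrite mul_e (linear_combination (mu^~ (e j))) // => a X X'; apply: mu_linl.
have mu_Dr j : mu (e i) (D *m e j) = \sum_m D m j *: mu (e i) (e m).
  by rewrite mul_e (linear_combination (mu (e i))) // => a X X'; apply: mu_linr.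
apply/matrixP=> k j; rewrite [RHS]mxE /defect mu_Dl mu_Dr /pi /mix /Lfam !mxE !summxE.
by congr (_ - _ - _); apply: eq_bigr => m _; rewrite !mxE // mulrC.
Qed.

Lemma derivationP (D : 'M[C]_n) : is_derivation mu D <-> forall i, pi D Lfam i = 0.
Proof.
split=> [/derivation_defect D0 i | pi0].
  by apply/matrixP=> k j; rewrite pi_Lfam mxE D0 !mxE.
apply/derivation_defect/bilinear_eq0; first exact: defect_bilinear.
move=> i j; apply/matrixP=> k l; rewrite (ord1 l).
by have := congr1 (fun M : 'M_n => M k j) (pi0 i); rewrite pi_Lfam !mxE.
Qed.

(* The right-multiplication part of M_mu, rewritten in terms of left
   multiplications by exchanging the order of summation. *)
Lemma trace_Rpart (D : 'M[C]_n) :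
  \sum_j \tr (adjmx (Rmx mu (e j)) *m Rmx mu (e j) *m D) = famdot (mix D Lfam) Lfam.
Proof.
transitivity (\sum_j \sum_k \sum_i
   ((\sum_m (mu (e m) (e j)) k 0 * D m i) * ((mu (e i) (e j)) k 0)^*)).
  apply: eq_bigr => j _; rewrite -mulmxA mxtrace_mulC trace_mul_adj.
  apply: eq_bigr=> k _; apply: eq_bigr => i _; rewrite !mxE; congr (_ * _).
  by apply: eq_bigr => m _; rewrite !mxE.
rewrite exchange_big /=; under eq_bigr do rewrite exchange_big /=.
rewrite exchange_big; apply: eq_bigr => i _; rewrite trace_mul_adj.
apply: eq_bigr => k _; apply: eq_bigr => j _; rewrite /mix summxE !mxE.
by congr (_ * _); apply: eq_bigr => m _; rewrite !mxE mulrC.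
Qed.

Lemma trace_Mmu (D : 'M[C]_n) : \tr (Mmu mu *m D) = 2 * famdot (pi D Lfam) Lfam.
Proof.
rewrite /Mmu !mulmxBl -!scalemxAl !mulmx_suml !linearB /= !linearZ /= !raddf_sum.
rewrite /pi (famdotBl (fun i => D *m Lfam i - mix D Lfam i)) famdotBl -trace_Rpart.
have -> : \sum_i \tr (Lmx mu (e i) *m adjmx (Lmx mu (e i)) *m D) =
          famdot (fun i => D *m Lfam i) Lfam.
  by apply: eq_bigr => i _; rewrite mxtrace_mulC mulmxA.
have -> : \sum_i \tr (adjmx (Lmx mu (e i)) *m Lmx mu (e i) *m D) =
          famdot (fun i => Lfam i *m D) Lfam.
  by apply: eq_bigr => i _; rewrite -mulmxA mxtrace_mulC.
by rewrite !mulrBr [LHS]addrAC.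
Qed.

(* For a derivation A, tr(M_mu [A, A^*]) = 2 |pi A^* Lfam|^2, since
   pi [A, A^*] = [pi A, pi A^*], pi A^* is adjoint to pi A, and pi A Lfam = 0. *)
Lemma trace_Mmu_commutator (A : 'M[C]_n) : is_derivation mu A ->
  \tr (Mmu mu *m (A *m adjmx A - adjmx A *m A)) =
  2 * famdot (pi (adjmx A) Lfam) (pi (adjmx A) Lfam).
Proof.
move=> /derivationP piA0; rewrite trace_Mmu; congr (_ * _).
have -> : famdot (pi (A *m adjmx A - adjmx A *m A) Lfam) Lfam =
    famdot (fun i => pi A (pi (adjmx A) Lfam) i - pi (adjmx A) (pi A Lfam) i) Lfam.
  by apply: eq_bigr => i _; rewrite pi_commutator.
rewrite famdotBl (famdot_pi A (pi (adjmx A) Lfam)) (famdot_pi (adjmx A) (pi A Lfam)).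
by rewrite (famdot0l (pi A Lfam)) ?subr0.
Qed.

End DerivationsOfBilinearMaps.

Local Open Scope complex_scope.

Theorem corollary3p2 (R : realType) (n : nat)
  (mu : 'cV[R[i]]_n -> 'cV[R[i]]_n -> 'cV[R[i]]_n) :
  bilinear_map mu ->
  (forall D : 'M[R[i]]_n, is_derivation mu D -> \tr (Mmu mu *m D) = 0) /\
  (forall A : 'M[R[i]]_n, is_derivation mu A ->
     0 <= \tr (Mmu mu *m (A *m adjmx A - adjmx A *m A)) /\
     (\tr (Mmu mu *m (A *m adjmx A - adjmx A *m A)) = 0 <-> is_derivation mu (adjmx A))).
Proof.
move=> mu_bilinear; split=> [D Dder | A Ader].
  by rewrite trace_Mmu famdot0l ?mulr0 //; apply/derivationP.
rewrite trace_Mmu_commutator //; split.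
  by rewrite mulr_ge0 ?ler0n ?famdot_ge0.
rewrite (derivationP _ mu_bilinear); split=> [| piA0]; last by rewrite famdot0l ?mulr0.
by move=> /eqP; rewrite mulf_eq0 pnatr_eq0 /= => /eqP /famdot_eq0.
Qed.
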